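(* Let $P\subseteq\mathsf{Pos}(R)$, $\alpha\in\Sigma$, and let $T$ be the transition tree of $P$. Then: every $\odot$-live node is in $T$ and has its left child in $T$; every $\odot$-live node that $\odot$-dominates some node of $N^\odot(P,\alpha)$ is a branching node of $T$; and every node that weakly $\odot$-dominates a branching node of $T$ is itself a branching node of $T$.
   Context: A regular expression $R$ over $\Sigma$ is identified with its parse tree; $\odot$-nodes $v$ have children $\mathsf{left}(v),\mathsf{right}(v)$. Positions are the character-labeled leaves, $\mathsf{Pos}_\alpha$ those labeled $\alpha$. $\mathsf{first}(v)$, $\mathsf{last}(v)$ are the sets of positions occurring first/last in a sequence of positions generated by the subexpression rooted at $v$; $\mathsf{firstextent}(p)=\{v:p\in\mathsf{first}(v)\}$, $\mathsf{lastextent}(p)=\{v:p\in\mathsf{last}(v)\}$, extended to sets by union. $N^\odot(P,\alpha)$ is the set of $\odot$-nodes $v$ with $\mathsf{left}(v)\in\mathsf{lastextent}(P)$ and $\mathsf{right}(v)\in\mathsf{firstextent}(\mathsf{Pos}_\alpha)$. The transition tree $T$ of $P$ is the subtree induced by the nodes of $P$ and all their ancestors; a branching node of $T$ has two children in $T$. A node $v$ is $\odot$-live if $v$ is a $\odot$-node and $\mathsf{left}(v)\in\mathsf{lastextent}(P)$. A node $v$ is $\odot$-dominated by $u$ if $u$ is a proper ancestor of $v$ and $\mathsf{first}(\mathsf{right}(v))\subseteq\mathsf{first}(\mathsf{right}(u))$. A node $v$ of $T$ is weakly $\odot$-dominated by $u$ if $u$ is $\odot$-live, $u$ is a proper ancestor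 of $v$, and $\mathsf{first}(v)\subseteq\mathsf{first}(\mathsf{right}(u))$. *)

(* Regular expressions as parse trees;
   nodes are addressed by root-to-node paths (seq bool):
   child of node a is rcons a false (left / only child) or rcons a true (right). *)
From mathcomp Require Import all_boot.
Set Implicit Arguments. Unset Strict Implicit. Unset Printing Implicit Defensive.

Inductive regex (Sigma : Type) : Type :=
| Eps : regex Sigma
| Sym : Sigma -> regex Sigma
| Union : regex Sigma -> regex Sigma -> regex Sigma
| Concat : regex Sigma -> regex Sigma -> regex Sigma
| Star : regex Sigma -> regex Sigma.
Arguments Eps {Sigma}.

Definition addr := seq bool.

Fixpoint subexp (Sigma : Type) (r : regex Sigma) (a : addr) : option (regex Sigma) :=
  match a, r with
  | [::], _ => Some r
  | false :: a', Union r1 _ => subexp r1 a'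
  | true :: a', Union _ r2 => subexp r2 a'
  | false :: a', Concat r1 _ => subexp r1 a'
  | true :: a', Concat _ r2 => subexp r2 a'
  | false :: a', Star r1 => subexp r1 a'
  | _, _ => None
  end.

Definition node (Sigma : Type) (R : regex Sigma) (v : addr) : Prop :=
  subexp R v <> None.

Definition is_pos (Sigma : Type) (R : regex Sigma) (p : addr) : Prop :=
  exists x, subexp R p = Some (Sym x).
Definition Pos_of (Sigma : Type) (R : regex Sigma) (alpha : Sigma) (p : addr) : Prop :=
  subexp R p = Some (Sym alpha).

Definition is_concat (Sigma : Type) (R : regex Sigma) (v : addr) : Prop :=
  exists r1 r2, subexp R v = Some (Concat r1 r2).

Definition lchild (v : addr) : addr := rcons v false.
Definition rchild (v : addr) : addr := rcons v true.

(* gen r a w : the subexpression r, located at address a, generates the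
   sequence w of positions (given by their global addresses). *)
Inductive gen (Sigma : Type) : regex Sigma -> addr -> seq addr -> Prop :=
| gen_eps a : gen Eps a [::]
| gen_sym x a : gen (Sym x) a [:: a]
| gen_unionl r1 r2 a w : gen r1 (rcons a false) w -> gen (Union r1 r2) a w
| gen_unionr r1 r2 a w : gen r2 (rcons a true) w -> gen (Union r1 r2) a w
| gen_concat r1 r2 a w1 w2 :
    gen r1 (rcons a false) w1 -> gen r2 (rcons a true) w2 ->
    gen (Concat r1 r2) a (w1 ++ w2)
| gen_star0 r a : gen (Star r) a [::]
| gen_starS r a w1 w2 :
    gen r (rcons a false) w1 -> gen (Star r) a w2 -> gen (Star r) a (w1 ++ w2).

Definition firstpos (Sigma : Type) (R : regex Sigma) (v : addr) (p : addr) : Prop :=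
  exists r, subexp R v = Some r /\ exists w, gen r v (p :: w).
Definition lastpos (Sigma : Type) (R : regex Sigma) (v : addr) (p : addr) : Prop :=
  exists r, subexp R v = Some r /\ exists w, gen r v (rcons w p).

Definition firstextent (Sigma : Type) (R : regex Sigma) (Q : addr -> Prop) (v : addr) : Prop :=
  exists p, Q p /\ firstpos R v p.
Definition lastextent (Sigma : Type) (R : regex Sigma) (Q : addr -> Prop) (v : addr) : Prop :=
  exists p, Q p /\ lastpos R v p.

Definition Nodot (Sigma : Type) (R : regex Sigma) (P : addr -> Prop) (alpha : Sigma)
  (v : addr) : Prop :=
  is_concat R v /\ lastextent R P (lchild v) /\ firstextent R (Pos_of R alpha) (rchild v).

Definition proper_ancestor (u v : addr) : Prop :=
  exists s, s <> [::] /\ v = u ++ s.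

Definition in_T (Sigma : Type) (R : regex Sigma) (P : addr -> Prop) (v : addr) : Prop :=
  node R v /\ exists p, P p /\ exists s, p = v ++ s.

Definition branching (Sigma : Type) (R : regex Sigma) (P : addr -> Prop) (v : addr) : Prop :=
  in_T R P v /\ in_T R P (rcons v false) /\ in_T R P (rcons v true).

Definition odot_live (Sigma : Type) (R : regex Sigma) (P : addr -> Prop) (v : addr) : Prop :=
  is_concat R v /\ lastextent R P (lchild v).

Definition odot_dominated (Sigma : Type) (R : regex Sigma) (v u : addr) : Prop :=
  proper_ancestor u v /\ (forall p, firstpos R (rchild v) p -> firstpos R (rchild u) p).

Definition weakly_odot_dominated (Sigma : Type) (R : regex Sigma) (P : addr -> Prop)
  (v u : addr) : Prop :=
  in_T R P v /\ odot_live R P u /\ proper_ancestor u v /\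
  (forall p, firstpos R v p -> firstpos R (rchild u) p).

From mathcomp Require Import all_boot.
Set Implicit Arguments. Unset Strict Implicit. Unset Printing Implicit Defensive.

(* The proof rests on three
   general facts about parse trees:
   - every position generated by the subexpression at address a lies below a
     (hence first(v) and last(v) lie below v), and every node lying above some
     position has a nonempty first set;
   - a proper descendant v of u that shares a descendant with rchild u lies
     itself below rchild u;
   - an odot-live node u has its left child in T (via a last position in P),
     so u is branching as soon as T meets the subtree of rchild u.
   Each claim of the theorem then reduces to exhibiting a node of T in the
   right subtree of u, which the domination hypothesis provides through a
   common first position. *)

Section TransitionTree.

Variables (Sigma : Type) (R : regex Sigma).

Lemma subexp_cat (v s : addr) (r : regex Sigma) :
  subexp R v = Some r -> subexp R (v ++ s) = subexp r s.
Proof.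
elim: v R r => [|b v IH] R' r /=; first by case: R' => [|?|??|??|?] [<-].
by case: b; case: R' => //= *; apply: IH.
Qed.

Lemma node_prefix (v s : addr) : node R (v ++ s) -> node R v.
Proof.
rewrite /node; elim: v R => [|b v IH] R' /=; first by case: R'.
by case: b; case: R' => //= *; apply: IH.
Qed.

Lemma node_rchild (u : addr) : is_concat R u -> node R (rchild u).
Proof.
move=> [r1 [r2 Hu]].
by rewrite /node /rchild -cats1 (subexp_cat _ Hu); case: r2 Hu.
Qed.

Lemma gen_below (r : regex Sigma) (a : addr) (w : seq addr) :
  gen r a w -> {in w, forall p, prefix a p}.
Proof.
have below_child b a' p : prefix (rcons a' b) p -> prefix a' p.
  by apply: prefix_trans; apply: prefix_rcons.
elim=> {r a w} // [x a p | r1 r2 a w _ IH p /IH | r1 r2 a w _ IH p /IH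
                 | r1 r2 a w1 w2 _ IH1 _ IH2 p | r a w1 w2 _ IH1 _ IH2 p].
- by rewrite inE => /eqP ->; apply: prefix_refl.
- exact: below_child.
- exact: below_child.
- by rewrite mem_cat => /orP [/IH1 | /IH2]; apply: below_child.
- by rewrite mem_cat => /orP [/IH1 /below_child | /IH2].
Qed.

Lemma firstpos_below (v p : addr) : firstpos R v p -> prefix v p.
Proof. by move=> [r [_ [w /gen_below]]]; apply; rewrite mem_head. Qed.

Lemma lastpos_below (v p : addr) : lastpos R v p -> prefix v p.
Proof. by move=> [r [_ [w /gen_below]]]; apply; rewrite mem_rcons mem_head. Qed.

Lemma gen_exists (r : regex Sigma) (a : addr) : exists w, gen r a w.
Proof.
elim: r a => [|x|r1 IH1 r2 IH2|r1 IH1 r2 IH2|r1 IH1] a.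
- by exists [::]; constructor.
- by exists [:: a]; constructor.
- by have [w Hw] := IH1 (rcons a false); exists w; constructor.
- have [w1 H1] := IH1 (rcons a false); have [w2 H2] := IH2 (rcons a true).
  by exists (w1 ++ w2); constructor.
- by exists [::]; constructor.
Qed.

Lemma gen_nonempty (r : regex Sigma) (s : addr) (x : Sigma) (a : addr) :
  subexp r s = Some (Sym x) -> exists q w, gen r a (q :: w).
Proof.
elim: r s a => [|y|r1 IH1 r2 IH2|r1 IH1 r2 IH2|r1 IH1] [|[] s] a //=.
- by move=> _; exists a, [::]; constructor.
- by move/(IH2 _ (rcons a true)) => [q [w Hw]]; exists q, w; apply: gen_unionr.
- by move/(IH1 _ (rcons a false)) => [q [w Hw]]; exists q, w; apply: gen_unionl.
- move/(IH2 _ (rcons a true)) => [q [w Hw]].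
  have [[|q1 w1] H1] := gen_exists r1 (rcons a false).
  + by exists q, w; exact: (gen_concat H1 Hw).
  + by exists q1, (w1 ++ q :: w); exact: (gen_concat H1 Hw).
- move/(IH1 _ (rcons a false)) => [q [w Hw]].
  have [w2 H2] := gen_exists r2 (rcons a true).
  by exists q, (w ++ w2); exact: (gen_concat Hw H2).
- move/(IH1 _ (rcons a false)) => [q [w Hw]].
  by exists q, (w ++ [::]); apply: gen_starS Hw _; constructor.
Qed.

Lemma firstpos_exists (v p : addr) :
  is_pos R p -> prefix v p -> exists q, firstpos R v q.
Proof.
move=> [x Hp] /prefixP [s Es]; move: Hp; rewrite Es => Hp.
have /node_prefix: node R (v ++ s) by rewrite /node Hp.
rewrite /node; case Hv: (subexp R v) => [r|] // _.
move: Hp; rewrite (subexp_cat _ Hv) => /(gen_nonempty v) [q [w Hw]].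
by exists q, r; split=> //; exists w.
Qed.

Lemma below_rchild (u v q : addr) :
  proper_ancestor u v -> prefix v q -> prefix (rchild u) q ->
  prefix (rchild u) v.
Proof.
move=> [[|b s] [//= _ ->]] /prefixP [t ->] /prefixP [t' E].
have: prefix (rchild u) (u ++ b :: s ++ t) by rewrite -catA in E; rewrite E prefix_prefix.
by rewrite /rchild -cats1 !prefix_catr //= !eqxx !prefix0s !andbT.
Qed.

Section InT.

Variable P : addr -> Prop.

Lemma in_TP (v : addr) :
  in_T R P v <-> node R v /\ exists p, P p /\ prefix v p.
Proof.
split=> [[Hv [p [Pp /prefixP Hp]]] | [Hv [p [Pp /prefixP Hp]]]];
  by split=> //; exists p.
Qed.

Lemma in_T_ancestor (v w : addr) :
  node R v -> prefix v w -> in_T R P w -> in_T R P v.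
Proof.
move=> Hv Hvw /in_TP [_ [p [Pp Hwp]]].
by apply/in_TP; split=> //; exists p; split=> //; apply: prefix_trans Hwp.
Qed.

Lemma in_T_lastextent (v : addr) : lastextent R P v -> in_T R P v.
Proof.
move=> [p [Pp Hlast]]; apply/in_TP; split; last first.
  by exists p; split=> //; apply: lastpos_below.
by case: Hlast => r [Hr _]; rewrite /node Hr.
Qed.

Lemma odot_live_in_T (v : addr) :
  odot_live R P v -> in_T R P v /\ in_T R P (lchild v).
Proof.
move=> [[r1 [r2 Hv]] /in_T_lastextent Hl]; split=> //.
by apply: in_T_ancestor Hl; [rewrite /node Hv | apply: prefix_rcons].
Qed.

Lemma branching_right (u w : addr) :
  odot_live R P u -> prefix (rchild u) w -> in_T R P w -> branching R P u.
Proof.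
move=> Hu Huw Hw; have [HuT HlT] := odot_live_in_T Hu.
split; [done | split; first exact: HlT].
by apply: in_T_ancestor Huw Hw; apply: node_rchild; case: Hu.
Qed.

End InT.

End TransitionTree.

Theorem lemma6 (Sigma : Type) (R : regex Sigma) (P : addr -> Prop) (alpha : Sigma) :
  (forall p, P p -> is_pos R p) ->
  (forall v, odot_live R P v -> in_T R P v /\ in_T R P (lchild v)) /\
  (forall u v, odot_live R P u -> Nodot R P alpha v -> odot_dominated R v u ->
     branching R P u) /\
  (forall u v, branching R P v -> weakly_odot_dominated R P v u -> branching R P u).
Proof.
move=> HP; split; first exact: odot_live_in_T.
split.
- (* The left child of v is in T; a first position of rchild v, being also
     one of rchild u, puts v in the right subtree of u. *)
  move=> u v Hu [_ [/in_T_lastextent HlT [q [_ Hq]]]] [Huv Hdom].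
  apply: branching_right Hu _ HlT.
  have Hvq : prefix v q.
    by apply: prefix_trans (firstpos_below Hq); apply: prefix_rcons.
  apply: prefix_trans (prefix_rcons _ _).
  exact: below_rchild Huv Hvq (firstpos_below (Hdom q Hq)).
- (* v lies above a position of P, hence has a first position, which is also
     one of rchild u; so v is a node of T in the right subtree of u. *)
  move=> u v [HvT _] [_ [Hu [Huv Hdom]]].
  have /in_TP [_ [p [Pp Hvp]]] := HvT.
  have [q Hq] := firstpos_exists (HP p Pp) Hvp.
  apply: branching_right Hu _ HvT.
  exact: below_rchild Huv (firstpos_below Hq) (firstpos_below (Hdom q Hq)).
Qed.
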